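(* Let $M$ be a bi-variate homogeneous symmetric mean having a symmetric asymptotic expansion with coefficients $(a_n)_{n\ge0}$. Then for fixed real $s,t$ with $s\ne\pm t$, $M(x+s,x+t)\sim\sum_{m\ge0}a_m(s,t)x^{-m+1}$ as $x\to\infty$, where $$a_m(s,t)=2^{-m}\sum_{n=0}^{\lfloor m/2\rfloor}a_n\binom{1-2n}{m-2n}(t-s)^{2n}(t+s)^{m-2n},\qquad m\in\mathbb N_0.$$
   Context: A bi-variate mean is $M:(0,\infty)^2\to(0,\infty)$ with $\min(s,t)\le M(s,t)\le\max(s,t)$; symmetric: $M(s,t)=M(t,s)$; homogeneous: $M(\lambda s,\lambda t)=\lambda M(s,t)$. $M$ has a symmetric asymptotic expansion with coefficients $(a_n)$ if for every fixed real $t$ and every $N\ge0$, $M(x-t,x+t)=\sum_{n=0}^Na_nt^{2n}x^{-2n+1}+o(x^{-2N+1})$ as $x\to\infty$. The binomial coefficient $\binom{r}{k}=r(r-1)\cdots(r-k+1)/k!$ for real $r$. The notation $F(x)\sim\sum_m c_mx^{-m+1}$ means $F(x)=\sum_{m=0}^Nc_mx^{-m+1}+o(x^{-N+1})$ for every $N$. *)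

From Stdlib Require Import Reals ZArith Arith.
Open Scope R_scope.

Fixpoint falling (r : R) (k : nat) : R :=
  match k with
  | O => 1
  | S k' => falling r k' * (r - INR k')
  end.

Definition gbinom (r : R) (k : nat) : R := falling r k / INR (fact k).

(* A bi-variate mean on (0,oo)^2 (values outside the domain are irrelevant). *)
Definition is_mean (M : R -> R -> R) : Prop :=
  forall s t, 0 < s -> 0 < t -> Rmin s t <= M s t <= Rmax s t.

Definition is_symmetric (M : R -> R -> R) : Prop :=
  forall s t, 0 < s -> 0 < t -> M s t = M t s.

Definition is_homogeneous (M : R -> R -> R) : Prop :=
  forall l s t, 0 < l -> 0 < s -> 0 < t -> M (l * s) (l * t) = l * M s t.

Definition little_o_infty (f g : R -> R) : Prop :=
  forall eps, 0 < eps -> exists X, forall x, X < x -> Rabs (f x) <= eps * Rabs (g x).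

Definition sym_asymp_expansion (M : R -> R -> R) (a : nat -> R) : Prop :=
  forall (t : R) (N : nat),
    little_o_infty
      (fun x => M (x - t) (x + t)
                - sum_f_R0 (fun n => a n * t ^ (2 * n) * powerRZ x (1 - 2 * Z.of_nat n)) N)
      (fun x => powerRZ x (1 - 2 * Z.of_nat N)).

Definition coef_st (a : nat -> R) (s t : R) (m : nat) : R :=
  (/ 2) ^ m *
  sum_f_R0 (fun n => a n * gbinom (1 - 2 * INR n) (m - 2 * n)
                     * (t - s) ^ (2 * n) * (t + s) ^ (m - 2 * n)) (Nat.div2 m).

Definition asymp_series (F : R -> R) (c : nat -> R) : Prop :=
  forall N : nat,
    little_o_infty
      (fun x => F x - sum_f_R0 (fun m => c m * powerRZ x (1 - Z.of_nat m)) N)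
      (fun x => powerRZ x (1 - Z.of_nat N)).

(* Put c = (s+t)/2 and d = (t-s)/2, so that M(x+s, x+t) = M(y-d, y+d) with
   y = x + c.  The symmetric expansion of M read at y gives
     M(x+s, x+t) = sum_{n<=N} a_n d^(2n) (x+c)^(1-2n) + o((x+c)^(1-2N)),
   and o((x+c)^(1-2N)) is o(x^(1-N)).  By Taylor's theorem with Lagrange
   remainder each shifted power (x+c)^(1-2n) has the binomial expansion
   sum_k binom(1-2n, k) c^k x^(1-2n-k); re-indexing by m = 2n + k and
   collecting the coefficient of x^(1-m) gives exactly coef_st a s t m. *)

From Stdlib Require Import Reals ZArith Lia Lra.
From Coquelicot Require Import Coquelicot.
Open Scope R_scope.

(** * Little-o and big-O at [+oo] *)

Definition big_O_infty (f g : R -> R) : Prop :=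
  exists K X, forall x, X < x -> Rabs (f x) <= K * Rabs (g x).

Lemma little_o_ext (f f' g : R -> R) :
  (forall x, f x = f' x) -> little_o_infty f g -> little_o_infty f' g.
Proof.
  intros E H eps Heps. destruct (H eps Heps) as [X HX].
  exists X. intros x Hx. rewrite <- E. auto.
Qed.

Lemma little_o_plus (f1 f2 g : R -> R) :
  little_o_infty f1 g -> little_o_infty f2 g ->
  little_o_infty (fun x => f1 x + f2 x) g.
Proof.
  intros H1 H2 eps Heps.
  destruct (H1 (eps / 2)) as [X1 HX1]; [lra|].
  destruct (H2 (eps / 2)) as [X2 HX2]; [lra|].
  exists (Rmax X1 X2). intros x Hx.
  pose proof (HX1 x (Rle_lt_trans _ _ _ (Rmax_l X1 X2) Hx)).
  pose proof (HX2 x (Rle_lt_trans _ _ _ (Rmax_r X1 X2) Hx)).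
  eapply Rle_trans; [apply Rabs_triang | lra].
Qed.

Lemma little_o_big_O (f g h : R -> R) :
  little_o_infty f g -> big_O_infty g h -> little_o_infty f h.
Proof.
  intros H [K [X HK]] eps Heps.
  set (K' := Rabs K + 1).
  assert (HK' : 0 < K') by (unfold K'; pose proof (Rabs_pos K); lra).
  destruct (H (eps / K')) as [X1 HX1]; [apply Rdiv_lt_0_compat; lra|].
  exists (Rmax X X1). intros x Hx.
  specialize (HK x (Rle_lt_trans _ _ _ (Rmax_l X X1) Hx)).
  specialize (HX1 x (Rle_lt_trans _ _ _ (Rmax_r X X1) Hx)).
  assert (Hg : Rabs (g x) <= K' * Rabs (h x)).
  { eapply Rle_trans; [exact HK|].
    apply Rmult_le_compat_r; [apply Rabs_pos|]. unfold K'; pose proof (Rle_abs K); lra. }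
  eapply Rle_trans; [exact HX1|].
  apply Rle_trans with (eps / K' * (K' * Rabs (h x))).
  - apply Rmult_le_compat_l; [left; apply Rdiv_lt_0_compat; lra | exact Hg].
  - right. field. lra.
Qed.

Lemma big_O_trans (f g h : R -> R) :
  big_O_infty f g -> big_O_infty g h -> big_O_infty f h.
Proof.
  intros [K1 [X1 H1]] [K2 [X2 H2]].
  exists (Rabs K1 * K2), (Rmax X1 X2). intros x Hx.
  specialize (H1 x (Rle_lt_trans _ _ _ (Rmax_l X1 X2) Hx)).
  specialize (H2 x (Rle_lt_trans _ _ _ (Rmax_r X1 X2) Hx)).
  eapply Rle_trans; [exact H1|].
  apply Rle_trans with (Rabs K1 * Rabs (g x)).
  - apply Rmult_le_compat_r; [apply Rabs_pos | apply Rle_abs].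
  - rewrite Rmult_assoc. apply Rmult_le_compat_l; [apply Rabs_pos | exact H2].
Qed.

Lemma little_o_scal (k : R) (f g : R -> R) :
  little_o_infty f g -> little_o_infty (fun x => k * f x) g.
Proof.
  intros H eps Heps.
  set (K := Rabs k + 1).
  assert (HK : 0 < K) by (unfold K; pose proof (Rabs_pos k); lra).
  destruct (H (eps / K)) as [X HX]; [apply Rdiv_lt_0_compat; lra|].
  exists X. intros x Hx. specialize (HX x Hx). rewrite Rabs_mult.
  pose proof (Rabs_pos (g x)).
  apply Rle_trans with (K * (eps / K * Rabs (g x))).
  - apply Rmult_le_compat; try apply Rabs_pos; [unfold K; lra | exact HX].
  - right. field. lra.
Qed.

Lemma little_o_shift (f g : R -> R) (c : R) :
  little_o_infty f g -> little_o_infty (fun x => f (x + c)) (fun x => g (x + c)).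
Proof.
  intros H eps Heps. destruct (H eps Heps) as [X HX].
  exists (X - c). intros x Hx. apply HX. lra.
Qed.

Lemma little_o_of_big_O_powerRZ (f : R -> R) (e : Z) :
  big_O_infty f (fun x => powerRZ x e) -> little_o_infty f (fun x => powerRZ x (e + 1)).
Proof.
  intros [C [X H]] eps Heps.
  exists (Rmax (Rmax X 1) (Rabs C / eps)). intros x Hx.
  assert (HX : X < x) by (eapply Rle_lt_trans; [eapply Rle_trans; [apply Rmax_l|apply Rmax_l]|exact Hx]).
  assert (H1 : 1 < x) by (eapply Rle_lt_trans; [eapply Rle_trans; [apply Rmax_r|apply Rmax_l]|exact Hx]).
  assert (HC : Rabs C / eps < x) by (eapply Rle_lt_trans; [apply Rmax_r|exact Hx]).
  assert (Hxe : 0 < powerRZ x e) by (apply powerRZ_lt; lra).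
  specialize (H x HX). rewrite (Rabs_right (powerRZ x e)) in H by lra.
  rewrite powerRZ_add, powerRZ_1, (Rabs_right (powerRZ x e * x)) by nra.
  eapply Rle_trans; [exact H|].
  assert (Rabs C < eps * x).
  { apply (Rmult_lt_compat_r eps) in HC; [|lra].
    unfold Rdiv in HC. rewrite Rmult_assoc, Rinv_l, Rmult_1_r in HC; lra. }
  pose proof (Rle_abs C). nra.
Qed.

Lemma powerRZ_le_exponent (x : R) (a b : Z) :
  1 <= x -> (a <= b)%Z -> powerRZ x a <= powerRZ x b.
Proof.
  intros Hx Hab. replace b with (a + (b - a))%Z by lia.
  rewrite powerRZ_add by lra.
  destruct (Z_of_nat_complete (b - a) ltac:(lia)) as [n ->]. rewrite <- pow_powerRZ.
  pose proof (powerRZ_lt x a ltac:(lra)). pose proof (pow_R1_Rle x n Hx). nra.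
Qed.

Lemma big_O_powerRZ_exponent (a b : Z) :
  (a <= b)%Z -> big_O_infty (fun x => powerRZ x a) (fun x => powerRZ x b).
Proof.
  intros Hab. exists 1, 1. intros x Hx.
  rewrite !Rabs_right by (left; apply powerRZ_lt; lra).
  rewrite Rmult_1_l. apply powerRZ_le_exponent; [lra | exact Hab].
Qed.

Lemma Rpower_shift_bound (x w e : R) :
  0 < x -> 2 * Rabs w <= x -> Rpower (x + w) e <= Rpower 2 (Rabs e) * Rpower x e.
Proof.
  intros Hx Hw. pose proof (proj1 (Rabs_le_between w _) (Rle_refl (Rabs w))).
  set (y := (x + w) / x).
  assert (Hy : / 2 <= y <= 2).
  { unfold y. split; [apply Rmult_le_reg_r with x | apply Rmult_le_reg_r with x];
      try lra; unfold Rdiv; rewrite Rmult_assoc, Rinv_l; lra. }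
  replace (x + w) with (y * x) by (unfold y; field; lra).
  rewrite <- Rpower_mult_distr by lra.
  apply Rmult_le_compat_r; [left; apply exp_pos|].
  assert (Hln : Rabs (ln y) <= ln 2).
  { assert (Hlo : ln (/ 2) <= ln y) by (apply ln_le; lra).
    assert (Hhi : ln y <= ln 2) by (apply ln_le; lra).
    rewrite ln_Rinv in Hlo by lra. apply Rabs_le; lra. }
  assert (Hexp : e * ln y <= Rabs e * ln 2).
  { eapply Rle_trans; [apply Rle_abs|]. rewrite Rabs_mult.
    apply Rmult_le_compat_l; [apply Rabs_pos | exact Hln]. }
  unfold Rpower. destruct (Rle_lt_or_eq_dec _ _ Hexp) as [Hlt | ->].
  - left. apply exp_increasing, Hlt.
  - right. reflexivity.
Qed.

Lemma powerRZ_shift_big_O (c : R) (p : Z) :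
  big_O_infty (fun x => powerRZ (x + c) p) (fun x => powerRZ x p).
Proof.
  exists (Rpower 2 (Rabs (IZR p))), (2 * Rabs c). intros x Hx.
  pose proof (Rabs_pos c). pose proof (proj1 (Rabs_le_between c _) (Rle_refl (Rabs c))).
  rewrite !powerRZ_Rpower by lra.
  rewrite (Rabs_right (Rpower (x + c) _)), (Rabs_right (Rpower x _))
    by (left; apply exp_pos).
  apply Rpower_shift_bound; lra.
Qed.

(** * The binomial expansion of [(x+c)^P] with Lagrange remainder *)

(* Taylor's theorem is applied to [u |-> (x + c u)^P] on [[0,1]]; its
   [k]-th derivative is [P(P-1)...(P-k+1) c^k (x + c u)^(P-k)]. *)
Definition shifted_power_derivative (x c P : R) (k : nat) (u : R) : R :=
  falling P k * c ^ k * Rpower (x + c * u) (P - INR k).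

Lemma locally_shift_positive (x c u : R) :
  0 < x + c * u -> locally u (fun v => 0 < x + c * v).
Proof.
  intros H.
  assert (Hr : 0 < (x + c * u) / (Rabs c + 1)).
  { apply Rdiv_lt_0_compat; [lra | pose proof (Rabs_pos c); lra]. }
  exists (mkposreal _ Hr). intros v Hv.
  change (Rabs (v - u) < (x + c * u) / (Rabs c + 1)) in Hv.
  assert (Hcv : Rabs (c * (v - u)) < x + c * u).
  { rewrite Rabs_mult. pose proof (Rabs_pos c). pose proof (Rabs_pos (v - u)).
    apply Rle_lt_trans with (Rabs c * ((x + c * u) / (Rabs c + 1))).
    - apply Rmult_le_compat_l; lra.
    - apply Rlt_le_trans with ((Rabs c + 1) * ((x + c * u) / (Rabs c + 1))).
      + apply Rmult_lt_compat_r; lra.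
      + right. field. lra. }
  apply Rabs_def2 in Hcv. lra.
Qed.

Lemma is_derive_shifted_power_derivative (x c P : R) (k : nat) (u : R) :
  0 < x + c * u ->
  is_derive (shifted_power_derivative x c P k) u (shifted_power_derivative x c P (S k) u).
Proof.
  intros H. unfold shifted_power_derivative.
  assert (Hpow : is_derive (fun z => Rpower z (P - INR k)) (x + c * u)
                   ((P - INR k) * Rpower (x + c * u) (P - INR k - 1))).
  { apply is_derive_Reals, derivable_pt_lim_power, H. }
  assert (Hlin : is_derive (fun u => x + c * u) u c) by (auto_derive; auto; ring).
  pose proof (is_derive_scal _ _ (falling P k * c ^ k) _ (is_derive_comp _ _ _ _ _ Hpow Hlin))
    as Hd.
  eapply is_derive_ext; [intros; reflexivity|].
  replace (falling P (S k) * c ^ S k * Rpower (x + c * u) (P - INR (S k)))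
    with (falling P k * c ^ k * scal c ((P - INR k) * Rpower (x + c * u) (P - INR k - 1))).
  - exact Hd.
  - rewrite S_INR. simpl. unfold scal; simpl; unfold mult; simpl.
    replace (P - (INR k + 1)) with (P - INR k - 1) by ring. ring.
Qed.

Lemma Derive_n_shifted_power (x c P : R) (k : nat) (u : R) :
  0 < x + c * u ->
  Derive_n (fun v => Rpower (x + c * v) P) k u = shifted_power_derivative x c P k u.
Proof.
  revert u. induction k as [|k IH]; intros u H.
  - unfold shifted_power_derivative. simpl. rewrite Rminus_0_r. ring.
  - simpl. rewrite (Derive_ext_loc _ (shifted_power_derivative x c P k)).
    + apply is_derive_unique, is_derive_shifted_power_derivative, H.
    + destruct (locally_shift_positive x c u H) as [r Hr].
      exists r. intros v Hv. apply IH, Hr, Hv.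
Qed.

Lemma binomial_taylor_lagrange (x c P : R) (K : nat) :
  2 * Rabs c < x ->
  exists z, 0 < z < 1 /\
    Rpower (x + c) P =
      sum_f_R0 (fun k => gbinom P k * c ^ k * Rpower x (P - INR k)) K
      + gbinom P (S K) * c ^ S K * Rpower (x + c * z) (P - INR (S K)).
Proof.
  intros Hx.
  assert (Hpos : forall u, 0 <= u <= 1 -> 0 < x + c * u).
  { intros u Hu. assert (Hcu : Rabs (c * u) <= Rabs c).
    { rewrite Rabs_mult, (Rabs_right u) by lra. pose proof (Rabs_pos c). nra. }
    apply Rabs_le_between in Hcu. pose proof (Rabs_pos c). lra. }
  destruct (Taylor_Lagrange (fun v => Rpower (x + c * v) P) K 0 1 Rlt_0_1) as [z [Hz E]].
  { intros u Hu k Hk. destruct k as [|k]; [simpl; auto|].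
    exists (shifted_power_derivative x c P (S k) u).
    apply is_derive_ext_loc with (shifted_power_derivative x c P k).
    - destruct (locally_shift_positive x c u (Hpos u Hu)) as [r Hr].
      exists r. intros v Hv. symmetry. apply Derive_n_shifted_power, Hr, Hv.
    - apply is_derive_shifted_power_derivative, Hpos, Hu. }
  exists z. split; [exact Hz|].
  rewrite Rmult_1_r in E. rewrite E, Derive_n_shifted_power by (apply Hpos; lra).
  unfold shifted_power_derivative, gbinom. rewrite Rminus_0_r, pow1. f_equal.
  - apply sum_eq. intros k _. rewrite Derive_n_shifted_power by (apply Hpos; lra).
    unfold shifted_power_derivative.
    rewrite Rmult_0_r, Rplus_0_r, pow1. field. apply INR_fact_neq_0.
  - field. apply INR_fact_neq_0.
Qed.

Lemma binomial_remainder_bound (c P : R) (K : nat) :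
  exists C X, forall x, X < x ->
    Rabs (Rpower (x + c) P - sum_f_R0 (fun k => gbinom P k * c ^ k * Rpower x (P - INR k)) K)
      <= C * Rpower x (P - INR (S K)).
Proof.
  set (e := P - INR (S K)).
  exists (Rabs (gbinom P (S K)) * Rabs c ^ S K * Rpower 2 (Rabs e)), (2 * Rabs c).
  intros x Hx. pose proof (Rabs_pos c).
  destruct (binomial_taylor_lagrange x c P K Hx) as [z [Hz ->]].
  match goal with |- Rabs (?S + ?T - ?S) <= _ => replace (S + T - S) with T by ring end.
  rewrite !Rabs_mult, <- RPow_abs, (Rabs_right (Rpower _ _)) by (left; apply exp_pos).
  rewrite !Rmult_assoc. apply Rmult_le_compat_l; [apply Rabs_pos|].
  apply Rmult_le_compat_l; [apply pow_le, Rabs_pos|].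
  apply Rpower_shift_bound; [lra|].
  rewrite Rabs_mult, (Rabs_right z) by lra. nra.
Qed.

Lemma binomial_expansion_powerRZ (c : R) (p : Z) (K : nat) :
  big_O_infty
    (fun x => powerRZ (x + c) p
              - sum_f_R0 (fun k => gbinom (IZR p) k * c ^ k * powerRZ x (p - Z.of_nat k)) K)
    (fun x => powerRZ x (p - Z.of_nat K - 1)).
Proof.
  destruct (binomial_remainder_bound c (IZR p) K) as [C [X HB]].
  exists C, (Rmax X (2 * Rabs c)). intros x Hx.
  pose proof (Rabs_pos c). pose proof (proj1 (Rabs_le_between c _) (Rle_refl (Rabs c))).
  assert (HX : X < x) by (eapply Rle_lt_trans; [apply Rmax_l | exact Hx]).
  assert (Hc : 2 * Rabs c < x) by (eapply Rle_lt_trans; [apply Rmax_r | exact Hx]).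
  rewrite !powerRZ_Rpower by lra.
  rewrite (Rabs_right (Rpower x _)) by (left; apply exp_pos).
  replace (IZR (p - Z.of_nat K - 1)) with (IZR p - INR (S K))
    by (rewrite !minus_IZR, <- INR_IZR_INZ, S_INR; ring).
  erewrite sum_eq; [apply HB, HX|].
  intros k _. rewrite powerRZ_Rpower, minus_IZR, <- INR_IZR_INZ by lra. reflexivity.
Qed.

Definition expansion_to_order (F : R -> R) (c : nat -> R) (N : nat) : Prop :=
  little_o_infty (fun x => F x - sum_f_R0 (fun m => c m * powerRZ x (1 - Z.of_nat m)) N)
                 (fun x => powerRZ x (1 - Z.of_nat N)).

Lemma expansion_coef_ext (F : R -> R) (c c' : nat -> R) (N : nat) :
  (forall m, (m <= N)%nat -> c m = c' m) ->
  expansion_to_order F c N -> expansion_to_order F c' N.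
Proof.
  intros E H. eapply little_o_ext; [|exact H]. intros x. cbv beta.
  f_equal. apply sum_eq. intros m Hm. rewrite E by exact Hm. reflexivity.
Qed.

Lemma expansion_perturb (F G : R -> R) (c : nat -> R) (N : nat) :
  little_o_infty (fun x => F x - G x) (fun x => powerRZ x (1 - Z.of_nat N)) ->
  expansion_to_order G c N -> expansion_to_order F c N.
Proof.
  intros HFG HG. eapply little_o_ext; [|exact (little_o_plus _ _ _ HFG HG)].
  intros x. cbv beta. ring.
Qed.

Lemma expansion_lin_comb (w : nat -> R) (F : nat -> R -> R) (c : nat -> nat -> R)
    (N L : nat) :
  (forall n, expansion_to_order (F n) (c n) N) ->
  expansion_to_order (fun x => sum_f_R0 (fun n => w n * F n x) L)
                     (fun m => sum_f_R0 (fun n => w n * c n m) L) N.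
Proof.
  intros H. unfold expansion_to_order.
  induction L as [|L IH].
  - eapply little_o_ext; [|exact (little_o_scal (w 0%nat) _ _ (H 0%nat))].
    intros x. cbn [sum_f_R0]. rewrite Rmult_minus_distr_l, scal_sum.
    f_equal. apply sum_eq. intros m _. ring.
  - eapply little_o_ext; [|exact (little_o_plus _ _ _ IH (little_o_scal (w (S L)) _ _ (H (S L))))].
    intros x. cbn [sum_f_R0].
    set (p := fun m => powerRZ x (1 - Z.of_nat m)).
    set (A := fun m => sum_f_R0 (fun n => w n * c n m) L).
    assert (Hsplit : sum_f_R0 (fun m => (A m + w (S L) * c (S L) m) * p m) N
                     = sum_f_R0 (fun m => A m * p m) N
                       + w (S L) * sum_f_R0 (fun m => c (S L) m * p m) N).
    { rewrite scal_sum, <- plus_sum. apply sum_eq. intros m _. ring. }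
    unfold A, p in Hsplit. rewrite Hsplit. ring.
Qed.

(** * Expansion of the shifted odd powers [(x+c)^(1-2n)] *)

(* Coefficient of [x^(1-m)] in the binomial expansion of [(x+c)^(1-2n)]:
   it is [binom(1-2n, m-2n) c^(m-2n)] for [m >= 2n] and [0] otherwise. *)
Definition shifted_power_coef (c : R) (n m : nat) : R :=
  if (2 * n <=? m)%nat then gbinom (1 - 2 * INR n) (m - 2 * n) * c ^ (m - 2 * n) else 0.

Lemma shifted_power_coef_low (c : R) (n m : nat) :
  (m < 2 * n)%nat -> shifted_power_coef c n m = 0.
Proof.
  intros Hm. unfold shifted_power_coef.
  replace (2 * n <=? m)%nat with false by (symmetry; apply Nat.leb_gt, Hm). reflexivity.
Qed.

Lemma shifted_power_coef_high (c : R) (n k : nat) :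
  shifted_power_coef c n (2 * n + k) = gbinom (1 - 2 * INR n) k * c ^ k.
Proof.
  unfold shifted_power_coef.
  replace (2 * n <=? 2 * n + k)%nat with true by (symmetry; apply Nat.leb_le; lia).
  replace (2 * n + k - 2 * n)%nat with k by lia. reflexivity.
Qed.

Lemma sum_drop_leading_zeros (f : nat -> R) (j K : nat) :
  (forall m, (m < j)%nat -> f m = 0) ->
  sum_f_R0 f (j + K) = sum_f_R0 (fun k => f (j + k)%nat) K.
Proof.
  intros H. induction K as [|K IH].
  - rewrite Nat.add_0_r. destruct j as [|j]; [reflexivity|].
    cbn [sum_f_R0]. rewrite sum_eq_R0 by (intros; apply H; lia).
    rewrite Nat.add_0_r. ring.
  - rewrite Nat.add_succ_r. cbn [sum_f_R0]. rewrite IH, Nat.add_succ_r. reflexivity.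
Qed.

Lemma sum_drop_trailing_zeros (f : nat -> R) (L k : nat) :
  (forall n, (L < n <= L + k)%nat -> f n = 0) ->
  sum_f_R0 f (L + k) = sum_f_R0 f L.
Proof.
  induction k as [|k IH]; intros H.
  - rewrite Nat.add_0_r. reflexivity.
  - rewrite Nat.add_succ_r. cbn [sum_f_R0].
    rewrite IH, H by (intros; try apply H; lia). ring.
Qed.

Lemma IZR_odd_exponent (n : nat) : IZR (1 - 2 * Z.of_nat n) = 1 - 2 * INR n.
Proof. rewrite minus_IZR, mult_IZR, <- INR_IZR_INZ. reflexivity. Qed.

Lemma expansion_shifted_power (c : R) (n N : nat) :
  expansion_to_order (fun x => powerRZ (x + c) (1 - 2 * Z.of_nat n)) (shifted_power_coef c n) N.
Proof.
  unfold expansion_to_order. destruct (le_lt_dec (2 * n) N) as [Hle | Hlt].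
  - (* the binomial series of order [K = N - 2n], with error [O(x^(-N))] *)
    set (K := (N - 2 * n)%nat).
    pose proof (little_o_of_big_O_powerRZ _ _
                  (binomial_expansion_powerRZ c (1 - 2 * Z.of_nat n) K)) as Ho.
    replace (1 - 2 * Z.of_nat n - Z.of_nat K - 1 + 1)%Z with (1 - Z.of_nat N)%Z in Ho
      by (unfold K; lia).
    eapply little_o_ext; [|exact Ho]. intros x. cbv beta. f_equal.
    replace N with (2 * n + K)%nat at 1 by (unfold K; lia).
    rewrite sum_drop_leading_zeros
      by (intros m Hm; rewrite shifted_power_coef_low by exact Hm; ring).
    apply sum_eq. intros k _. rewrite shifted_power_coef_high, IZR_odd_exponent.
    do 2 f_equal. lia.
  - (* [N < 2n]: all coefficients up to [N] vanish and the power itself is small *)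
    assert (Hexp : (1 - 2 * Z.of_nat n + 1 <= 1 - Z.of_nat N)%Z) by lia.
    pose proof (little_o_big_O _ _ _
                  (little_o_of_big_O_powerRZ _ _ (powerRZ_shift_big_O c (1 - 2 * Z.of_nat n)))
                  (big_O_powerRZ_exponent _ _ Hexp)) as Ho.
    eapply little_o_ext; [|exact Ho]. intros x. cbv beta.
    rewrite sum_eq_R0; [ring|].
    intros m Hm. rewrite shifted_power_coef_low by lia. ring.
Qed.

Lemma coef_st_lin_comb (a : nat -> R) (s t : R) (N m : nat) :
  (m <= N)%nat ->
  sum_f_R0 (fun n => a n * ((t - s) / 2) ^ (2 * n) * shifted_power_coef ((s + t) / 2) n m) N
  = coef_st a s t m.
Proof.
  intros Hm. pose proof (Nat.div2_odd m) as Hd.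
  assert (Hb : (Nat.b2n (Nat.odd m) <= 1)%nat) by (destruct (Nat.odd m); simpl; lia).
  unfold coef_st. set (L := Nat.div2 m) in *.
  replace N with (L + (N - L))%nat at 1 by lia.
  rewrite sum_drop_trailing_zeros
    by (intros n Hn; rewrite shifted_power_coef_low by lia; ring).
  rewrite scal_sum. apply sum_eq. intros n Hn.
  unfold shifted_power_coef.
  replace (2 * n <=? m)%nat with true by (symmetry; apply Nat.leb_le; lia).
  replace ((/ 2) ^ m) with ((/ 2) ^ (2 * n) * (/ 2) ^ (m - 2 * n))
    by (rewrite <- pow_add; f_equal; lia).
  unfold Rdiv. rewrite !Rpow_mult_distr, (Rplus_comm s t). ring.
Qed.

Theorem proposition3p3 (M : R -> R -> R) (a : nat -> R) :
  is_mean M -> is_symmetric M -> is_homogeneous M ->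
  sym_asymp_expansion M a ->
  forall s t : R, s <> t -> s <> - t ->
    asymp_series (fun x => M (x + s) (x + t)) (coef_st a s t).
Proof.
  intros _ _ _ Hexp s t _ _ N.
  set (d := (t - s) / 2). set (c := (s + t) / 2).
  set (G := fun x => sum_f_R0 (fun n => a n * d ^ (2 * n) * powerRZ (x + c) (1 - 2 * Z.of_nat n)) N).
  assert (HG : expansion_to_order G (coef_st a s t) N).
  { eapply expansion_coef_ext; [intros m Hm; apply coef_st_lin_comb, Hm|].
    exact (expansion_lin_comb (fun n => a n * d ^ (2 * n)) _ _ N N
             (fun n => expansion_shifted_power c n N)). }
  (* [M(x+s,x+t) = M(y-d,y+d)] with [y = x+c], so the symmetric expansion gives
     [M(x+s,x+t) - G(x) = o((x+c)^(1-2N)) = o(x^(1-N))] *)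
  apply (expansion_perturb _ G); [|exact HG].
  assert (Hsym := little_o_shift _ _ c (Hexp d N)). cbv beta in Hsym.
  eapply little_o_big_O.
  - eapply little_o_ext; [|exact Hsym]. intros x. unfold G.
    replace (x + c - d) with (x + s) by (unfold c, d; field).
    replace (x + c + d) with (x + t) by (unfold c, d; field). reflexivity.
  - apply (big_O_trans _ _ _ (powerRZ_shift_big_O c _)), big_O_powerRZ_exponent. lia.
Qed.
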